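(* Let $K$ be a simple $\Delta$-ring which is a $\mathbb Q$-algebra, with field of constants $C$, and assume there exists a morphism of $C$-algebras $\varphi:K\to C$. Let $A$ be a $C$-algebra endowed with the zero derivations, endow $A\otimes_C K$ with the derivations $\tilde\partial(a\otimes\lambda)=a\otimes\partial\lambda$, and let $i:A\to A\otimes_CK$ be $a\mapsto a\otimes1$. Then for every $\mathfrak p\in\mathrm{Spec}\,A$, the ideal $(i(\mathfrak p))$ generated by $i(\mathfrak p)$ is a prime $\Delta$-ideal of $A\otimes_C K$.
   Context: $\Delta$ is a fixed set; rings are commutative with unit. A $\Delta$-ring is a ring with a map $\Delta\to\mathrm{Der}(R)$; a $\Delta$-ideal is an ideal stable under all $\partial\in\Delta$; a $\Delta$-ring is simple if its only $\Delta$-ideals are $0$ and $R$; $C$ is the field of elements killed by all $\partial\in\Delta$. *)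

From mathcomp Require Import all_boot all_algebra.
Set Implicit Arguments. Unset Strict Implicit. Unset Printing Implicit Defensive.
Import GRing.Theory.
Local Open Scope ring_scope.

Definition is_ideal (R : comNzRingType) (I : R -> Prop) : Prop :=
  [/\ I 0, (forall x y, I x -> I y -> I (x + y)) & (forall r x, I x -> I (r * x))].

Definition is_prime_ideal (R : comNzRingType) (I : R -> Prop) : Prop :=
  [/\ is_ideal I, ~ I 1 & (forall x y, I (x * y) -> I x \/ I y)].

Definition ideal_gen (R : comNzRingType) (S : R -> Prop) : R -> Prop :=
  fun x => exists n (r s : 'I_n -> R), (forall k, S (s k)) /\ x = \sum_(k < n) r k * s k.

Definition img (A B : Type) (f : A -> B) (P : A -> Prop) : B -> Prop :=
  fun y => exists2 x, P x & y = f x.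

Definition is_derivation (R : comNzRingType) (d : R -> R) : Prop :=
  (forall x y, d (x + y) = d x + d y) /\ (forall x y, d (x * y) = d x * y + x * d y).

Definition is_Delta_ideal (Delta : Type) (R : comNzRingType) (d : Delta -> R -> R)
  (I : R -> Prop) : Prop :=
  is_ideal I /\ (forall D x, I x -> I (d D x)).

Definition Delta_simple (Delta : Type) (R : comNzRingType) (d : Delta -> R -> R) : Prop :=
  forall I, is_Delta_ideal d I -> (forall x, I x <-> x = 0) \/ (forall x, I x).

Definition is_alg_morph (C : fieldType) (A B : comAlgType C) (f : A -> B) : Prop :=
  [/\ (forall x y, f (x + y) = f x + f y), (forall x y, f (x * y) = f x * f y),
      f 1 = 1 & (forall (c : C) x, f (c *: x) = c *: f x)].

(* (T, i, j) is a tensor product A (x)_C K of commutative C-algebras: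
   universal property of the coproduct (pushout over C) of commutative C-algebras. *)
Definition is_tensor_product (C : fieldType) (A K T : comAlgType C)
  (i : A -> T) (j : K -> T) : Prop :=
  [/\ is_alg_morph i, is_alg_morph j &
   forall (R : comAlgType C) (f : A -> R) (g : K -> R),
     is_alg_morph f -> is_alg_morph g ->
     exists h : T -> R, [/\ is_alg_morph h, (forall a, h (i a) = f a),
                            (forall l, h (j l) = g l) &
       forall h' : T -> R, is_alg_morph h' -> (forall a, h' (i a) = f a) ->
                           (forall l, h' (j l) = g l) -> forall t, h' t = h t]].

From HB Require Import structures.
From mathcomp Require Import all_boot all_algebra ring boolp.
Import GRing.Theory.
Local Open Scope ring_scope.
Set Implicit Arguments. Unset Strict Implicit. Unset Printing Implicit Defensive.

(* Let J be the ideal of A (x) K generated by p (x) 1.  Modulo J, every element is a sum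
   sum_k a_k (x) l_k with the a_k linearly independent over C modulo p.  Composing with the
   map A (x) K -> A, a (x) l |-> phi(l) a, shows that the coefficient sequences of such sums
   lying in J form a Delta-ideal of K avoiding 1, hence vanish by simplicity.  A
   leading-coefficient version of this argument shows that every Delta-ideal strictly above
   J contains some a (x) 1 with a not in p, and such elements are non-zero-divisors modulo J
   because p is prime.  In a Q-algebra radicals of Delta-ideals and colon ideals of radical
   Delta-ideals are Delta-ideals (Ritt), so these two facts force J to be radical, then
   prime. *)

Section AlgMorph.
Variables (C : fieldType) (A B : comAlgType C) (f : A -> B).
Hypothesis f_morph : is_alg_morph f.

Lemma alg_morph_nmod : nmod_morphism f.
Proof. by case: f_morph => fD _ _ _; split=> //; apply/(addrI (f 0)); rewrite -fD !addr0. Qed.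

Definition lrmorph_of : {lrmorphism A -> B} :=
  HB.pack f (GRing.isNmodMorphism.Build A B f alg_morph_nmod)
    (GRing.isMonoidMorphism.Build A B f (let: And4 _ fM f1 _ := f_morph in (f1, fM)))
    (GRing.isScalable.Build C A B *:%R f (let: And4 _ _ _ fZ := f_morph in fZ)).

End AlgMorph.

Lemma alg_morph_id (C : fieldType) (A : comAlgType C) : is_alg_morph (@id A).
Proof. by []. Qed.

Lemma alg_morph_comp (C : fieldType) (A B D : comAlgType C) (f : A -> B) (g : B -> D) :
  is_alg_morph f -> is_alg_morph g -> is_alg_morph (g \o f).
Proof.
move=> [fD fM f1 fZ] [gD gM g1 gZ].
by split=> [x y|x y||c x] /=; rewrite ?fD ?gD ?fM ?gM ?f1 ?g1 ?fZ ?gZ.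
Qed.

Section Ideals.
Variables (R : comNzRingType) (I : R -> Prop).
Hypothesis I_ideal : is_ideal I.

Lemma ideal0 : I 0. Proof. by case: I_ideal. Qed.
Lemma idealD x y : I x -> I y -> I (x + y). Proof. by case: I_ideal => _ + _; apply. Qed.
Lemma idealMl r x : I x -> I (r * x). Proof. by case: I_ideal => _ _; apply. Qed.
Lemma idealMr r x : I x -> I (x * r). Proof. by rewrite mulrC; apply: idealMl. Qed.
Lemma idealN x : I x -> I (- x). Proof. by rewrite -mulN1r; apply: idealMl. Qed.
Lemma idealB x y : I x -> I y -> I (x - y). Proof. by move=> Ix /idealN; apply: idealD. Qed.
Lemma idealMn x n : I x -> I (x *+ n). Proof. by rewrite -mulr_natr; apply: idealMr. Qed.
Lemma ideal_sum n (F : 'I_n -> R) : (forall k, I (F k)) -> I (\sum_(k < n) F k).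
Proof. by move=> IF; apply: big_ind => //; [exact: ideal0 | exact: idealD]. Qed.

End Ideals.

Definition catf (X : Type) n m (f : 'I_n -> X) (g : 'I_m -> X) (k : 'I_(n + m)) : X :=
  match split k with inl k' => f k' | inr k' => g k' end.

Lemma sum_catf (X Y : Type) (V : nmodType) (F : X -> Y -> V) n m
    (f : 'I_n -> X) (g : 'I_m -> X) (f' : 'I_n -> Y) (g' : 'I_m -> Y) :
  \sum_(k < n + m) F (catf f g k) (catf f' g' k)
    = \sum_(k < n) F (f k) (f' k) + \sum_(k < m) F (g k) (g' k).
Proof.
by rewrite big_split_ord /catf; congr (_ + _); apply: eq_bigr => k _;
  rewrite ?(unsplitK (inl _ k)) ?(unsplitK (inr _ k)).
Qed.

Lemma ideal_gen_ideal (R : comNzRingType) (S : R -> Prop) : is_ideal (ideal_gen S).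
Proof.
split.
- by exists 0%N, (fun=> 0), (fun=> 0); rewrite big_ord0; split=> [[]|].
- move=> _ _ [n [r [s [Ss ->]]]] [m [r' [s' [Ss' ->]]]].
  exists (n + m), (catf r r'), (catf s s'); rewrite sum_catf; split=> // k.
  by rewrite /catf; case: split.
- move=> c _ [n [r [s [Ss ->]]]]; exists n, (fun k => c * r k), s; split=> //.
  by rewrite mulr_sumr; apply: eq_bigr => k _; rewrite mulrA.
Qed.

Lemma mem_ideal_gen (R : comNzRingType) (S : R -> Prop) x : S x -> ideal_gen S x.
Proof. by exists 1%N, (fun=> 1), (fun=> x); rewrite big_ord1 mul1r. Qed.

Section Derivation.
Variables (R : comNzRingType) (d : R -> R).
Hypothesis d_der : is_derivation d.

Lemma derD x y : d (x + y) = d x + d y. Proof. by case: d_der. Qed.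
Lemma derM x y : d (x * y) = d x * y + x * d y. Proof. by case: d_der. Qed.
Lemma der0 : d 0 = 0. Proof. by apply/(addrI (d 0)); rewrite -derD !addr0. Qed.
Lemma der_sum n (F : 'I_n -> R) : d (\sum_(k < n) F k) = \sum_(k < n) d (F k).
Proof. exact: (big_morph d derD der0). Qed.
Lemma der1 : d 1 = 0.
Proof.
have := derM 1 1; rewrite !mulr1 mul1r => E.
by apply/(addrI (d 1)); rewrite addr0 -E.
Qed.

Lemma derX x n : d (x ^+ n.+1) = (x ^+ n * d x) *+ n.+1.
Proof.
elim: n => [|n IHn]; first by rewrite expr1 expr0 mul1r.
by rewrite exprS derM IHn mulrnAr mulrA -exprS [in RHS]mulrS mulrC.
Qed.

Lemma mulr_derX x n : x * d (x ^+ n) = (x ^+ n * d x) *+ n.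
Proof.
case: n => [|n]; first by rewrite expr0 der1 mulr0 mulr0n.
by rewrite derX mulrnAr mulrA -exprS mulrC exprS.
Qed.

End Derivation.

Section DeltaIdeals.
Variables (Delta : Type) (R : comNzRingType) (d : Delta -> R -> R).
Hypothesis d_der : forall D, is_derivation (d D).

Definition radical (I : R -> Prop) : R -> Prop := fun x => exists n, I (x ^+ n).

Lemma radical_ideal I : is_ideal I -> is_ideal (radical I).
Proof.
move=> I_ideal; split.
- by exists 1%N; rewrite expr1; exact: ideal0.
- move=> x y [n Ixn] [m Iym]; exists (n + m)%N; rewrite exprDn.
  apply: (ideal_sum I_ideal) => k; apply: (idealMn I_ideal).
  have [le_mk|lt_km] := leqP m k.
    have -> : y ^+ k = y ^+ m * y ^+ (k - m) by rewrite -exprD subnKC.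
    by rewrite mulrCA; apply: (idealMr I_ideal).
  by rewrite -addnBA 1?ltnW // exprD -mulrA; apply: (idealMr I_ideal).
- by move=> r x [n Ixn]; exists n; rewrite exprMn; apply: (idealMl I_ideal).
Qed.

Hypothesis R_Qalg : forall n : nat, exists y : R, y * n.+1%:R = 1.

Lemma ideal_divn (I : R -> Prop) x n : is_ideal I -> I (x *+ n.+1) -> I x.
Proof.
move=> I_ideal Ixn; have [y Ey] := R_Qalg n.
have -> : x = y * (x *+ n.+1) by rewrite -mulr_natr mulrCA Ey mulr1.
exact: idealMl.
Qed.

Lemma Delta_ideal_derX I D z n : is_Delta_ideal d I -> I (z ^+ n) -> I (d D z ^+ n.*2).
Proof.
move=> [I_ideal I_der] Izn; set z' := d D z.
suff Ik k : (k <= n)%N -> I (z ^+ (n - k) * z' ^+ k.*2).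
  by have := Ik n (leqnn n); rewrite subnn mul1r.
elim: k => [|k IHk] lt_kn; first by rewrite subn0 mulr1.
have := IHk (ltnW lt_kn); rewrite -subnSK //.
set m := (n - k.+1)%N; set u := z ^+ m.+1 * z' ^+ k.*2 => Iu.
(* z' * d u = (m+1) z^m z'^(2k+2) + 2k z'' u, so the first summand lies in I. *)
have Edu : z' * d D u = (z ^+ m * z' ^+ k.+1.*2) *+ m.+1 + (d D z' * u) *+ k.*2.
  rewrite /u (derM (d_der D)) (derX (d_der D)) mulrDr.
  have -> : z' * (z ^+ m.+1 * d D (z' ^+ k.*2)) = z ^+ m.+1 * (z' * d D (z' ^+ k.*2)).
    by rewrite mulrCA.
  rewrite (mulr_derX (d_der D)); congr (_ + _).
    by rewrite mulrnAl mulrnAr; congr (_ *+ _); rewrite doubleS !exprS /z'; ring.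
  by rewrite mulrnAr; congr (_ *+ _); ring.
apply: (ideal_divn (n := m) I_ideal).
have -> : (z ^+ m * z' ^+ k.+1.*2) *+ m.+1 = z' * d D u - (d D z' * u) *+ k.*2.
  by rewrite Edu addrK.
apply: (idealB I_ideal); first by apply/(idealMl I_ideal)/I_der.
by apply/(idealMn I_ideal)/(idealMl I_ideal).
Qed.

Lemma Delta_ideal_radical I : is_Delta_ideal d I -> is_Delta_ideal d (radical I).
Proof.
move=> I_Delta; split; first exact/radical_ideal/I_Delta.1.
by move=> D x [n Ixn]; exists n.*2; apply: Delta_ideal_derX.
Qed.

Lemma Delta_ideal_colon I x : is_Delta_ideal d I -> (forall z, radical I z -> I z) ->
  is_Delta_ideal d (fun u => I (x * u)).
Proof.
move=> [I_ideal I_der] I_rad; split; first split.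
- by rewrite mulr0; exact: ideal0.
- by move=> u v Iu Iv; rewrite mulrDr; apply: idealD.
- by move=> r u Iu; rewrite mulrCA; apply: idealMl.
move=> D u Iu; have Idxu : I (d D (x * u)) by apply: I_der.
(* (dx u)^2 = dx u * d (x u) - x u * dx du, so dx u lies in the radical of I. *)
have Idx_u : I (d D x * u).
  apply: I_rad; exists 2%N.
  have -> : (d D x * u) ^+ 2 = d D x * u * d D (x * u) - x * u * (d D x * d D u).
    by rewrite (derM (d_der D)); ring.
  by apply: (idealB I_ideal); [apply: (idealMl I_ideal) | apply: (idealMr I_ideal)].
have -> : x * d D u = d D (x * u) - d D x * u.
  by rewrite (derM (d_der D)) [d D x * u + _]addrC addrK.
exact: idealB.
Qed.

Lemma Delta_ideal_prime I : is_Delta_ideal d I -> ~ I 1 ->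
  (forall L, is_Delta_ideal d L -> (forall x, I x -> L x) -> (exists x, L x /\ ~ I x) ->
     exists2 s, L s & forall x, I (s * x) -> I x) ->
  is_prime_ideal I.
Proof.
move=> I_Delta I1 regular; have [I_ideal _] := I_Delta.
have I_rad z : radical I z -> I z.
  move=> Iz; apply: contrapT => nIz.
  have [s [k Isk] s_reg] : exists2 s, radical I s & forall x, I (s * x) -> I x.
    apply: regular (Delta_ideal_radical I_Delta) _ _; last by exists z.
    by move=> x Ix; exists 1%N; rewrite expr1.
  by apply: I1; elim: k Isk => [|k IHk]; rewrite ?exprS // => /s_reg.
split=> // x y Ixy; have [Ix|nIx] := pselect (I x); [by left | right].
apply: contrapT => nIy.
have [s Ixs s_reg] : exists2 s, I (x * s) & forall x, I (s * x) -> I x.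
  apply: regular (Delta_ideal_colon x I_Delta I_rad) _ _; last by exists y.
  by move=> u; apply: idealMl.
by apply/nIx/s_reg; rewrite mulrC.
Qed.

End DeltaIdeals.

Section Subalgebra.
Variables (C : fieldType) (T : comAlgType C) (S : pred T).
Hypothesis S_subalg : GRing.subalg_closed S.

(* The dummy [let] makes the key of the instance below depend on [S_subalg]. *)
Definition subalg_pred : pred T := let _ := S_subalg in S.
HB.instance Definition _ := GRing.isSubalgClosed.Build C T subalg_pred S_subalg.

Definition subalg : Type := {x : T | x \in subalg_pred}.
HB.instance Definition _ := [isSub of subalg for (@sval T (fun x => x \in subalg_pred))].
HB.instance Definition _ := [Choice of subalg by <:].
HB.instance Definition _ := [SubChoice_isSubAlgebra of subalg by <:].
HB.instance Definition _ := [SubNzRing_isSubComNzRing of subalg by <:].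

End Subalgebra.

Definition tensor_sum (C : fieldType) (A K T : comAlgType C) (i : A -> T) (j : K -> T)
    n (a : 'I_n -> A) (l : 'I_n -> K) : T :=
  \sum_(k < n) i (a k) * j (l k).

Section TensorSpanned.
Variables (C : fieldType) (A K T : comAlgType C) (i : A -> T) (j : K -> T).
Hypothesis T_tensor : is_tensor_product i j.

Lemma tensor_subalg_full (S : pred T) (S_subalg : GRing.subalg_closed S) :
  (forall a, i a \in S) -> (forall l, j l \in S) -> forall t, t \in S.
Proof.
move=> Si Sj t; have [i_morph j_morph T_univ] := T_tensor.
have Sub_morph (B : comAlgType C) (f : B -> T) (Sf : forall x, f x \in subalg_pred S_subalg) :
    is_alg_morph f -> is_alg_morph (fun x => Sub (f x) (Sf x) : subalg S_subalg).
  by case=> fD fM f1 fZ; split=> *; apply: val_inj; rewrite /= ?SubK.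
have [h [h_morph hi hj _]] :=
  T_univ _ _ _ (Sub_morph _ _ Si i_morph) (Sub_morph _ _ Sj j_morph).
have [h0 [_ _ _ h0_uniq]] := T_univ _ _ _ i_morph j_morph.
have val_morph : is_alg_morph (val : subalg S_subalg -> T) by [].
have val_h : val (h t) = t.
  have := h0_uniq (val \o h) (alg_morph_comp h_morph val_morph)
    (fun a => congr1 val (hi a)) (fun l => congr1 val (hj l)) t.
  by move=> /= ->; rewrite -(h0_uniq id).
by rewrite -val_h; exact: valP.
Qed.

Lemma tensor_spanned t : exists n (a : 'I_n -> A) (l : 'I_n -> K), t = tensor_sum i j a l.
Proof.
have [i_morph j_morph _] := T_tensor.
pose iR := lrmorph_of i_morph; pose jR := lrmorph_of j_morph.
pose spanned t := exists n (a : 'I_n -> A) (l : 'I_n -> K), t = tensor_sum iR jR a l.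
have spanned_pure a l : spanned (iR a * jR l).
  by exists 1%N, (fun=> a), (fun=> l); rewrite /tensor_sum big_ord1.
have spanned_add u v : spanned u -> spanned v -> spanned (u + v).
  move=> [n1 [a1 [l1 ->]]] [n2 [a2 [l2 ->]]].
  exists (n1 + n2), (catf a1 a2), (catf l1 l2).
  by rewrite /tensor_sum (sum_catf (fun x y => iR x * jR y)).
have spanned_sum n (F : 'I_n -> T) : (forall k, spanned (F k)) -> spanned (\sum_(k < n) F k).
  move=> SF; apply: (big_ind spanned) => //; exists 0%N, (fun=> 0), (fun=> 0).
  by rewrite /tensor_sum big_ord0.
have spanned_subalg : GRing.subalg_closed [pred t | `[< spanned t >]].
  split=> [|c u v /asboolP[n [a [l ->]]] /asboolP Sv
           |u v /asboolP[n [a [l ->]]] /asboolP[m [b [l' ->]]]]; apply/asboolP.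
  - by have := spanned_pure 1 1; rewrite !rmorph1 mulr1.
  - apply/spanned_add/Sv; exists n, (fun k => c *: a k), l.
    by rewrite /tensor_sum scaler_sumr; apply: eq_bigr => k _; rewrite linearZ scalerAl.
  - rewrite /tensor_sum mulr_suml; apply/spanned_sum => k; rewrite mulr_sumr.
    by apply/spanned_sum => k'; rewrite mulrACA -!rmorphM; apply: spanned_pure.
have Si a : i a \in [pred t | `[< spanned t >]].
  by apply/asboolP; have := spanned_pure a 1; rewrite rmorph1 mulr1.
have Sj l : j l \in [pred t | `[< spanned t >]].
  by apply/asboolP; have := spanned_pure 1 l; rewrite rmorph1 mul1r.
exact/asboolP/(tensor_subalg_full spanned_subalg Si Sj).
Qed.

End TensorSpanned.

Section TensorIdeal.
Variables (Delta : Type) (C : fieldType) (K : comAlgType C) (dK : Delta -> K -> K).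
Hypotheses (dK_der : forall D, is_derivation (dK D)) (K_simple : Delta_simple dK).
Hypothesis K_const : forall x : K, (forall D, dK D x = 0) -> exists c : C, x = c%:A.
Variables (A T : comAlgType C) (i : {lrmorphism A -> T}) (j : {lrmorphism K -> T}).
Local Notation tsum := (tensor_sum i j).
Hypothesis T_spanned : forall t, exists n (a : 'I_n -> A) (l : 'I_n -> K), t = tsum a l.
Variable dT : Delta -> T -> T.
Hypothesis dT_der : forall D, is_derivation (dT D).
Hypothesis dT_def : forall D a l, dT D (i a * j l) = i a * j (dK D l).
Variables (phi : K -> C) (Phi : {rmorphism T -> A}).
Hypotheses (Phi_i : forall a, Phi (i a) = a) (Phi_j : forall l, Phi (j l) = (phi l)%:A).
Variable p : A -> Prop.
Hypothesis p_ideal : is_ideal p.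

Lemma tensor_sum0 n (a : 'I_n -> A) : tsum a (fun=> 0) = 0.
Proof. by rewrite /tensor_sum big1 // => k _; rewrite rmorph0 mulr0. Qed.

Lemma tensor_sumD n (a : 'I_n -> A) l1 l2 :
  tsum a (fun k => l1 k + l2 k) = tsum a l1 + tsum a l2.
Proof. by rewrite /tensor_sum -big_split; apply: eq_bigr => k _; rewrite rmorphD mulrDr. Qed.

Lemma tensor_sumMl n (a : 'I_n -> A) r l : tsum a (fun k => r * l k) = j r * tsum a l.
Proof. by rewrite /tensor_sum mulr_sumr; apply: eq_bigr => k _; rewrite rmorphM mulrCA. Qed.

Lemma tensor_sum_der D n (a : 'I_n -> A) l : dT D (tsum a l) = tsum a (fun k => dK D (l k)).
Proof. by rewrite /tensor_sum der_sum //; apply: eq_bigr => k _; rewrite dT_def. Qed.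

Lemma tensor_sum_tail n (a : 'I_n.+1 -> A) l : l ord0 = 0 ->
  tsum a l = tsum (fun k => a (lift ord0 k)) (fun k => l (lift ord0 k)).
Proof. by move=> l0; rewrite /tensor_sum big_ord_recl l0 rmorph0 mulr0 add0r. Qed.

Lemma tensor_sum_scalar n (a : 'I_n -> A) (c : 'I_n -> C) :
  tsum a (fun k => (c k)%:A) = i (\sum_(k < n) c k *: a k).
Proof. by rewrite linear_sum; apply: eq_bigr => k _; rewrite rmorph_alg mulr_algr linearZZ. Qed.

Lemma Phi_tensor_sum n (a : 'I_n -> A) l : Phi (tsum a l) = \sum_(k < n) phi (l k) *: a k.
Proof. by rewrite rmorph_sum; apply: eq_bigr => k _; rewrite rmorphM Phi_i Phi_j mulr_algr. Qed.

Lemma dT_i D a : dT D (i a) = 0.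
Proof. by rewrite -[i a]mulr1 -(rmorph1 j) dT_def der1 // rmorph0 mulr0. Qed.

Definition J : T -> Prop := ideal_gen (img i p).

Lemma J_i a : p a -> J (i a).
Proof. by move=> pa; apply: mem_ideal_gen; exists a. Qed.

Lemma J_Delta_ideal : is_Delta_ideal dT J.
Proof.
split; first exact: ideal_gen_ideal.
move=> D _ [n [r [s [Ss ->]]]]; rewrite der_sum //.
apply: (ideal_sum (ideal_gen_ideal _)) => k; have [a pa ->] := Ss k.
by rewrite derM // dT_i mulr0 addr0; apply/(idealMl (ideal_gen_ideal _))/J_i.
Qed.

Let J_ideal : is_ideal J. Proof. exact: J_Delta_ideal.1. Qed.

Lemma Phi_J x : J x -> p (Phi x).
Proof.
move=> [n [r [s [Ss ->]]]]; rewrite rmorph_sum; apply: (ideal_sum p_ideal) => k.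
by have [a pa ->] := Ss k; rewrite rmorphM Phi_i; apply: idealMl.
Qed.

Definition free_modp n (a : 'I_n -> A) :=
  forall c : 'I_n -> C, p (\sum_(k < n) c k *: a k) -> forall k, c k = 0.

Lemma free_modp_tail n (a : 'I_n.+1 -> A) : free_modp a -> free_modp (fun k => a (lift ord0 k)).
Proof.
move=> a_free c pc k; pose c' k := if unlift ord0 k is Some k' then c k' else 0.
have := a_free c' _ (lift ord0 k); rewrite /c' liftK; apply.
by rewrite big_ord_recl unlift_none scale0r add0r; under eq_bigr do rewrite liftK.
Qed.

Definition coef_ideal (I : T -> Prop) n (a : 'I_n -> A) (k : 'I_n) : K -> Prop :=
  fun mu => exists2 l, I (tsum a l) & l k = mu.

Lemma coef_Delta_ideal I n (a : 'I_n -> A) k :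
  is_Delta_ideal dT I -> is_Delta_ideal dK (coef_ideal I a k).
Proof.
move=> [I_ideal I_der]; split; first split.
- by exists (fun=> 0); rewrite ?tensor_sum0 //; exact: ideal0.
- move=> _ _ [l1 Il1 <-] [l2 Il2 <-]; exists (fun k => l1 k + l2 k) => //.
  by rewrite tensor_sumD; apply: idealD.
- by move=> r _ [l Il <-]; exists (fun k => r * l k); rewrite ?tensor_sumMl //; apply: idealMl.
- by move=> D _ [l Il <-]; exists (fun k => dK D (l k)); rewrite -?tensor_sum_der //; apply: I_der.
Qed.

(* The coefficients of a sum in J form a Delta-ideal of K on which phi vanishes. *)
Lemma J_tensor_sum_eq0 n (a : 'I_n -> A) l : free_modp a -> J (tsum a l) -> forall k, l k = 0.
Proof.
move=> a_free Jl k; have [coef0|coef1] := K_simple (coef_Delta_ideal a k J_Delta_ideal).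
  by apply/coef0; exists l.
have [l1 Jl1 l1k] := coef1 1; have := Phi_J Jl1.
rewrite Phi_tensor_sum => /a_free/(_ k); rewrite l1k => phi1.
have : (1 : A) = 0 by rewrite -(rmorph1 Phi) -(rmorph1 j) Phi_j phi1 scale0r.
by move/eqP; rewrite oner_eq0.
Qed.

(* If sum_k c_k a_k lies in p with c_k0 <> 0, the k0-th term can be absorbed into the
   other ones modulo J. *)
Lemma J_tensor_sum_shorten n (a : 'I_n.+1 -> A) l : ~ free_modp a ->
  exists (a' : 'I_n -> A) l', J (tsum a l - tsum a' l').
Proof.
move=> /existsNP[c /not_implyP[pc /existsNP[k0 /eqP ck0]]].
pose e k := c (lift k0 k) / c k0.
exists (fun k => a (lift k0 k)), (fun k => l (lift k0 k) - e k *: l k0).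
have -> : tsum a l - tsum (fun k => a (lift k0 k)) (fun k => l (lift k0 k) - e k *: l k0)
    = i ((c k0)^-1 *: \sum_(k < n.+1) c k *: a k) * j (l k0).
  rewrite [in RHS](bigD1_ord k0) //= scalerDr scalerA mulVf // scale1r scaler_sumr.
  rewrite /tensor_sum (bigD1_ord k0) //= -addrA -sumrB linearD mulrDl; congr (_ + _).
  rewrite linear_sum mulr_suml; apply: eq_bigr => k _.
  rewrite -mulrBr -linearB opprB addrC subrK scalerA linearZZ (linearZZ i).
  by rewrite -scalerAr -scalerAl; congr (_ *: _); apply: mulrC.
by apply/(idealMr J_ideal)/J_i; rewrite -mulr_algl; apply: idealMl.
Qed.

Lemma tensor_sum_free_modJ n (a : 'I_n -> A) l :
  exists m (a' : 'I_m -> A) l', free_modp a' /\ J (tsum a l - tsum a' l').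
Proof.
elim: n a l => [|n IHn] a l.
  by exists 0%N, a, l; split=> [c _ [] //|]; rewrite subrr; apply: ideal0.
have [a_free|a_dep] := pselect (free_modp a).
  by exists n.+1, a, l; split=> //; rewrite subrr; apply: ideal0.
have [a' [l' Jl']] := J_tensor_sum_shorten l a_dep.
have [m [a'' [l'' [a''_free Jl'']]]] := IHn a' l'.
exists m, a'', l''; split=> //.
by rewrite -[tsum a l](subrK (tsum a' l')) -addrA; apply: idealD.
Qed.

Lemma free_modp_rep x : exists n (a : 'I_n -> A) l, free_modp a /\ J (x - tsum a l).
Proof. by have [n [a [l ->]]] := T_spanned x; apply: tensor_sum_free_modJ. Qed.

Lemma Delta_ideal_tensor_sum_meets_i (I : T -> Prop) : is_Delta_ideal dT I ->
  forall n (a : 'I_n -> A) l, free_modp a -> I (tsum a l) -> ~ J (tsum a l) ->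
  exists2 b, ~ p b & I (i b).
Proof.
move=> I_Delta; have [I_ideal I_der] := I_Delta.
elim=> [|n IHn] a l a_free Il nJl.
  by case: nJl; rewrite /tensor_sum big_ord0; apply: ideal0.
have a'_free := free_modp_tail a_free.
have [coef0|coef1] := K_simple (coef_Delta_ideal a ord0 I_Delta).
  have l0 : l ord0 = 0 by apply/coef0; exists l.
  by move: Il nJl; rewrite (tensor_sum_tail a l0); apply: IHn.
(* Some element of I has leading coefficient 1; if a derivative of it leaves J, recurse
   on that derivative, whose leading coefficient vanishes. *)
have [l1 Il1 l1_0] := coef1 1.
have [[D nJD]|JD] := pselect (exists D, ~ J (dT D (tsum a l1))).
  have dl1_0 : dK D (l1 ord0) = 0 by rewrite l1_0 der1.
  move: (I_der D _ Il1) nJD; rewrite tensor_sum_der (tensor_sum_tail a dl1_0).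
  exact: IHn.
have l1_const k : exists c : C, l1 k = c%:A.
  apply: K_const => D; apply: (J_tensor_sum_eq0 (l := fun k => dK D (l1 k)) a_free).
  rewrite -tensor_sum_der.
  by apply: contrapT => nJ; apply: JD; exists D.
have [c El1] := choice l1_const.
exists (\sum_(k < n.+1) c k *: a k).
  by move=> /a_free/(_ ord0) c0; move: (oner_neq0 K); rewrite -l1_0 El1 c0 scale0r eqxx.
by rewrite -tensor_sum_scalar -(funext El1).
Qed.

Lemma Delta_ideal_above_J_meets_i (I : T -> Prop) : is_Delta_ideal dT I ->
  (forall x, J x -> I x) -> (exists x, I x /\ ~ J x) -> exists2 b, ~ p b & I (i b).
Proof.
move=> I_Delta JI [x [Ix nJx]]; have [I_ideal _] := I_Delta.
have [n [a [l [a_free Jx]]]] := free_modp_rep x.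
apply: (Delta_ideal_tensor_sum_meets_i I_Delta (l := l) a_free).
  by rewrite -[tsum a l](subKr x); apply: idealB => //; apply: JI.
by move=> Jl; apply: nJx; rewrite -(subrK (tsum a l) x); apply: idealD.
Qed.

Lemma J_i_regular b x : (forall u v, p (u * v) -> p u \/ p v) -> ~ p b ->
  J (i b * x) -> J x.
Proof.
move=> p_mul nb Jbx; have [n [a [l [a_free Jx]]]] := free_modp_rep x.
have ba_free : free_modp (fun k => b * a k).
  move=> c; under eq_bigr do rewrite scalerAr.
  by rewrite -mulr_sumr => /p_mul[//|]; apply: a_free.
have Jbl : J (tsum (fun k => b * a k) l).
  have -> : tsum (fun k => b * a k) l = i b * x - i b * (x - tsum a l).
    rewrite mulrBr opprB addrC subrK /tensor_sum mulr_sumr.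
    by apply: eq_bigr => k _; rewrite rmorphM mulrA.
  by apply: idealB => //; apply: idealMl.
by move: Jx; rewrite (funext (J_tensor_sum_eq0 ba_free Jbl)) tensor_sum0 subr0.
Qed.

Lemma J_prime : (forall n, exists y : K, y * n.+1%:R = 1) ->
  ~ p 1 -> (forall u v, p (u * v) -> p u \/ p v) -> is_prime_ideal J.
Proof.
move=> K_Qalg p1 p_mul.
have T_Qalg n : exists y : T, y * n.+1%:R = 1.
  by have [y Ey] := K_Qalg n; exists (j y); rewrite -(rmorph_nat j) -rmorphM Ey rmorph1.
apply: (Delta_ideal_prime dT_der T_Qalg J_Delta_ideal).
  by move/Phi_J; rewrite rmorph1.
move=> L L_Delta JL nJL; have [b nb Lb] := Delta_ideal_above_J_meets_i L_Delta JL nJL.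
by exists (i b) => // x; apply: J_i_regular.
Qed.

End TensorIdeal.

Theorem corollary5p1
  (Delta : Type) (C : fieldType) (K : comAlgType C) (dK : Delta -> K -> K)
  (dK_der : forall D, is_derivation (dK D))
  (K_simple : Delta_simple dK)
  (K_Qalg : forall n : nat, exists y : K, y * (n.+1)%:R = 1)
  (K_const : forall x : K, (forall D, dK D x = 0) <-> exists c : C, x = c%:A)
  (phi : K -> C^o) (phi_morph : is_alg_morph phi)
  (A : comAlgType C) (T : comAlgType C) (i : A -> T) (j : K -> T)
  (T_tensor : is_tensor_product i j)
  (dT : Delta -> T -> T) (dT_der : forall D, is_derivation (dT D))
  (dT_def : forall D (a : A) (l : K), dT D (i a * j l) = i a * j (dK D l))
  (p : A -> Prop) (p_prime : is_prime_ideal p) :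
  is_prime_ideal (ideal_gen (img i p)) /\ is_Delta_ideal dT (ideal_gen (img i p)).
Proof.
have [i_morph j_morph T_univ] := T_tensor.
have phiA_morph : is_alg_morph (fun l : K => (phi l)%:A : A).
  have [phiD phiM phi1 phiZ] := phi_morph.
  split=> [x y|x y||c x]; rewrite ?phiD ?phiM ?phi1 ?phiZ /=.
  - exact: scalerDl.
  - by rewrite -scalerA mulr_algl.
  - exact: scale1r.
  - by rewrite scalerA.
have [Phi [Phi_morph Phi_i Phi_j _]] := T_univ A id _ (alg_morph_id A) phiA_morph.
have [p_ideal p1 p_mul] := p_prime.
pose iR := lrmorph_of i_morph; pose jR := lrmorph_of j_morph.
split; last exact: (J_Delta_ideal (i := iR) (j := jR) dK_der dT_der dT_def p).
apply: (J_prime dK_der K_simple _ (i := iR) (j := jR) (tensor_spanned T_tensor) dT_der dT_def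
  (Phi := lrmorph_of Phi_morph) Phi_i Phi_j p_ideal K_Qalg p1 p_mul).
by move=> x; case: (K_const x).
Qed.
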